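(* Let $\mathscr N$ be a weakly reversible chemical reaction network. If $\mathscr N=\mathscr N_1\cup\cdots\cup\mathscr N_k$ is an incidence independent decomposition, then each subnetwork $\mathscr N_i$ is weakly reversible, i.e., the decomposition is weakly reversible.
   Context: A chemical reaction network (CRN) $\mathscr N=(\mathscr S,\mathscr C,\mathscr R)$ consists of: - a finite set $\mathscr S$ of species; - a finite set $\mathscr C\subseteq\mathbb R^{\mathscr S}_{\ge0}$ of complexes; - a set $\mathscr R\subseteq\mathscr C\times\mathscr C$ of reactions, viewed as a directed graph on $\mathscr C$, with no reaction $y\to y$ and every complex occurring in some reaction. The network is weakly reversible if each of its linkage classes (connected components of the underlying undirected graph) is strongly connected. A decomposition $\mathscr N=\mathscr N_1\cup\cdots\cup\mathscr N_k$ is the set of subnetworks induced by a partition $\{\mathscr R_1,\ldots,\mathscr R_k\}$ of $\mathscr R$; $\mathscr N_i$ has reactions $\mathscr R_i$ and the complexes occurring in them. A decomposition is weakly reversible if every subnetwork is weakly reversible. The incidence map is $I_a:\mathbb R^{\mathscr R}\to\mathbb R^{\mathscr C}$, sending the basis vector of $y\to y'$ to $\omega_{y'}-\omega_y$. The decomposition is incidence independent if $\operatorname{Im}I_a$ is the direct sum of the images of the restrictions $I_{a,i}$ of $I_a$ to $\mathbb R^{\mathscr R_i}$. Equivalently, $n-l=\sum_i(n_i-l_i)$, with $n$ and $l$ the numbers of complexes and linkage classes of $\mathscr N$, and $n_i$ and $l_i$ those of $\mathscr N_i$. *)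

From HB Require Import structures.
From mathcomp Require Import all_boot all_order all_algebra.
From mathcomp Require Import reals.
Set Implicit Arguments. Unset Strict Implicit. Unset Printing Implicit Defensive.
Import Order.TTheory GRing.Theory Num.Theory.
Local Open Scope ring_scope.

(* A CRN with species type S and n complexes, indexed by 'I_n.
   Complex i is the vector cplx i in R^S (nonnegative, pairwise distinct).
   Reactions are pairs (i, j) meaning  cplx i -> cplx j. *)
Definition is_CRN (R : realType) (S : finType) (n : nat)
    (cplx : 'I_n -> {ffun S -> R}) (Rset : {set 'I_n * 'I_n}) : Prop :=
  [/\ injective cplx,
      (forall i s, 0 <= cplx i s),
      (forall p, p \in Rset -> p.1 != p.2) &
      (forall i : 'I_n, exists2 p, p \in Rset & (p.1 == i) || (p.2 == i))].

(* Directed reaction graph and its underlying undirected graph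
   (for the network/subnetwork with reaction set B; complexes not occurring
   in B are isolated and only connected to themselves). *)
Definition react_rel n (B : {set 'I_n * 'I_n}) : rel 'I_n :=
  fun x y => (x, y) \in B.
Definition undir_rel n (B : {set 'I_n * 'I_n}) : rel 'I_n :=
  fun x y => ((x, y) \in B) || ((y, x) \in B).

(* Weakly reversible: each linkage class (connected component of the
   underlying undirected graph) is strongly connected. *)
Definition weakly_reversible n (B : {set 'I_n * 'I_n}) : Prop :=
  forall x y : 'I_n, connect (undir_rel B) x y -> connect (react_rel B) x y.

(* Matrix of the incidence map restricted to R^B: rows indexed by all pairs
   of complexes; the row of a reaction (y, y') in B is w_{y'} - w_y, other
   rows are 0.  Its row space is Im I_{a,B}. *)
Definition incmx (R : realType) n (B : {set 'I_n * 'I_n})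
    : 'M[R]_(#|{: 'I_n * 'I_n}|, n) :=
  \matrix_(i, j)
    (let p := enum_val i in
     if p \in B then ((p.2 == j)%:R - (p.1 == j)%:R) else 0).

Definition incidence_independent (R : realType) n
    (P : {set {set 'I_n * 'I_n}}) (Rset : {set 'I_n * 'I_n}) : Prop :=
  (incmx R Rset :=: \sum_(B in P) <<incmx R B>>)%MS
  /\ mxdirect (\sum_(B in P) <<incmx R B>>)%MS.

From HB Require Import structures.
From mathcomp Require Import all_boot all_order all_algebra.
From mathcomp Require Import reals.
Set Implicit Arguments. Unset Strict Implicit. Unset Printing Implicit Defensive.
Import Order.TTheory GRing.Theory Num.Theory.
Local Open Scope ring_scope.

(* Write w_k for the k-th unit row vector and w_e := w_{e.2} - w_{e.1} for the
   reaction vector of e = (e.1, e.2); Im I_{a,B} is spanned by the w_e, e in B.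
   Let (a, b) be a reaction of a block B of the decomposition.  As N is weakly
   reversible, there is a directed path of N from b back to a, which together
   with (a, b) forms a closed walk whose reaction vectors sum to zero.
   Grouping this sum by blocks and using that Im I_a is the DIRECT sum of the
   Im I_{a,C}, the part of the sum coming from reactions of B vanishes.
   Finally, for a set Y of complexes closed under the reactions of B, the
   linear form "sum of the coordinates in Y" is nonnegative on every w_e with
   e in B, and positive when e enters Y; hence a zero-sum family of reactions
   of B never enters Y.  Taking Y = complexes reachable from b in B, the
   reaction (a, b) enters Y unless a is reachable from b in B, so b reaches a
   in B.  Thus every reaction of B is reversed by a path of B, which is weak
   reversibility of B. *)

Lemma path_steps (T : eqType) (r : rel T) (z : T) (p : seq T) :
  path r z p -> forall e, e \in zip (z :: p) p -> r e.1 e.2.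
Proof.
elim: p z => [|w p IHp] z //= /andP[rzw pw] e.
by rewrite inE => /orP[/eqP -> //|]; apply: IHp.
Qed.

Section ReactionVectors.
Variables (R : realType) (n : nat).

Definition rvec (e : 'I_n * 'I_n) : 'rV[R]_n :=
  delta_mx 0 e.2 - delta_mx 0 e.1.

Lemma rvec_sub_incmx (B : {set 'I_n * 'I_n}) e :
  e \in B -> (rvec e <= <<incmx R B>>)%MS.
Proof.
move=> eB; rewrite genmxE; apply: (eq_row_sub (enum_rank e)).
by apply/rowP => j; rewrite !mxE enum_rankK /= eB ![j == _]eq_sym.
Qed.

Lemma sum_rvec_walk (z : 'I_n) (p : seq 'I_n) :
  \sum_(e <- zip (z :: p) p) rvec e = delta_mx 0 (last z p) - delta_mx 0 z.
Proof.
elim: p z => [|w p IHp] z /=; first by rewrite big_nil subrr.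
by rewrite big_cons IHp /rvec /= addrC addrA subrK.
Qed.

Lemma sum_rvec_cycle (b : 'I_n) (p : seq 'I_n) :
  \sum_(e <- (last b p, b) :: zip (b :: p) p) rvec e = 0.
Proof. by rewrite big_cons sum_rvec_walk /rvec /= addrC addrA subrK subrr. Qed.

Definition flux (Y : {set 'I_n}) (v : 'rV[R]_n) : R := \sum_(j in Y) v 0 j.

Lemma flux_sum Y (s : seq ('I_n * 'I_n)) (Q : pred ('I_n * 'I_n)) :
  flux Y (\sum_(e <- s | Q e) rvec e) = \sum_(e <- s | Q e) flux Y (rvec e).
Proof.
apply: (big_morph (flux Y)) => [u v|]; rewrite /flux.
  by rewrite -big_split; apply: eq_bigr => j _; rewrite mxE.
by rewrite big1 // => j _; rewrite mxE.
Qed.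

Lemma flux_delta Y k : flux Y (delta_mx 0 k) = (k \in Y)%:R.
Proof.
have delta_jk j : delta_mx 0 k 0 j = (j == k)%:R :> R by rewrite mxE eq_sym.
rewrite /flux; case: (boolP (k \in Y)) => kY.
  rewrite (bigD1 k) //= delta_jk eqxx big1 ?addr0 // => j /andP[_ jk].
  by rewrite delta_jk (negbTE jk).
by rewrite big1 // => j jY; rewrite delta_jk; case: eqP => // jk; rewrite -jk jY in kY.
Qed.

Lemma flux_rvec Y e : flux Y (rvec e) = (e.2 \in Y)%:R - (e.1 \in Y)%:R.
Proof.
by rewrite -!flux_delta /flux -sumrB; apply: eq_bigr => j _; rewrite !mxE.
Qed.

(* A family of reactions of B with zero vector sum never enters a set Y of
   complexes closed under the reactions of B: all fluxes are nonnegative,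
   so they all vanish. *)
Lemma zero_sum_not_entering (B : {set 'I_n * 'I_n}) (Y : {set 'I_n})
    (s : seq ('I_n * 'I_n)) :
  (forall e, e \in B -> e.1 \in Y -> e.2 \in Y) ->
  \sum_(e <- s | e \in B) rvec e = 0 ->
  forall e, e \in s -> e \in B -> e.2 \in Y -> e.1 \in Y.
Proof.
move=> closedY sum0 e es eB eY; apply/negPn/negP => eNY.
have flux_ge0 f : f \in B -> 0 <= flux Y (rvec f).
  move=> fB; rewrite flux_rvec.
  by case: (boolP (f.1 \in Y)) => [/(closedY f fB) -> | _]; rewrite ?subrr ?subr0.
have : \sum_(f <- s | f \in B) flux Y (rvec f) == 0.
  by rewrite -flux_sum sum0 /flux big1 // => j _; rewrite mxE.
rewrite psumr_eq0 // => /allP/(_ e es); rewrite eB flux_rvec eY (negbTE eNY).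
by rewrite subr0 oner_eq0.
Qed.

End ReactionVectors.

Section IncidenceIndependentDecomposition.
Variables (R : realType) (n : nat).
Variables (Rset : {set 'I_n * 'I_n}) (P : {set {set 'I_n * 'I_n}}).
Hypothesis coverP : cover P = Rset.
Hypothesis directP : mxdirect (\sum_(B in P) <<incmx R B>>)%MS.

Lemma block_sub B : B \in P -> {subset B <= Rset}.
Proof. by move=> BP e eB; rewrite -coverP; apply/bigcupP; exists B. Qed.

(* If reactions of N have zero vector sum, then so do those among them lying
   in any given block: the block's part lies in Im I_{a,B}, minus it lies in
   the sum of the other Im I_{a,C}, and these meet trivially. *)
Lemma block_part_zero (s : seq ('I_n * 'I_n)) :
  {subset s <= Rset} -> \sum_(e <- s) rvec R e = 0 ->
  forall B, B \in P -> \sum_(e <- s | e \in B) rvec R e = 0.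
Proof.
move=> sR sum0 B BP.
pose vB := \sum_(e <- s | e \in B) rvec R e.
pose vO := \sum_(e <- s | e \notin B) rvec R e.
have in_B : (vB <= <<incmx R B>>)%MS.
  by apply: summx_sub => e; apply: rvec_sub_incmx.
have in_others : (vO <= \sum_(C | (C \in P) && (C != B)) <<incmx R C>>)%MS.
  rewrite /vO big_seq_cond; apply: summx_sub => e /andP[es eNB].
  have /bigcupP[C CP eC] : e \in cover P by rewrite coverP sR.
  apply: (sumsmx_sup C); last exact: rvec_sub_incmx.
  by rewrite CP; apply: contraNneq eNB => <-.
have vO_opp : vO = - vB.
  by apply/eqP; rewrite -addr_eq0 addrC -sum0 [X in _ == X](bigID (mem B)).
apply/eqP; rewrite -submx0 -((mxdirect_sumsP directP) B BP) sub_capmx in_B.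
by rewrite -eqmx_opp -vO_opp.
Qed.

Lemma block_reaction_reversed (B : {set 'I_n * 'I_n}) (a b : 'I_n) :
  B \in P -> (a, b) \in B -> connect (react_rel Rset) b a ->
  connect (react_rel B) b a.
Proof.
move=> BP abB /connectP[p pathp a_last]; subst a.
set s := (last b p, b) :: zip (b :: p) p.
have sR : {subset s <= Rset}.
  move=> e; rewrite inE => /orP[/eqP -> | es]; first by apply: (block_sub BP).
  by have := path_steps pathp es; rewrite /react_rel -surjective_pairing.
pose Y := [set z | connect (react_rel B) b z].
have closedY e : e \in B -> e.1 \in Y -> e.2 \in Y.
  rewrite !inE => eB /connect_trans; apply; apply: connect1.
  by rewrite /react_rel -surjective_pairing.
have blockB0 := block_part_zero sR (sum_rvec_cycle R b p) BP.
have := zero_sum_not_entering closedY blockB0 (mem_head _ _) abB.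
by rewrite !inE connect0 => /(_ isT).
Qed.

Lemma blocks_weakly_reversible :
  weakly_reversible Rset -> forall B, B \in P -> weakly_reversible B.
Proof.
move=> wrN B BP; apply: connect_sub => x y /orP[xyB | yxB].
  exact: connect1.
apply: (block_reaction_reversed BP yxB); apply/wrN/connect1.
by rewrite /undir_rel (block_sub BP yxB) orbT.
Qed.

End IncidenceIndependentDecomposition.

Theorem mainTheorem5 (R : realType) (S : finType) (n : nat)
    (cplx : 'I_n -> {ffun S -> R}) (Rset : {set 'I_n * 'I_n})
    (P : {set {set 'I_n * 'I_n}}) :
  is_CRN cplx Rset ->
  weakly_reversible Rset ->
  partition P Rset ->
  incidence_independent R P Rset ->
  forall B, B \in P -> weakly_reversible B.
Proof.
move=> _ wrN /and3P[/eqP coverP _ _] [_ directP].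
exact: blocks_weakly_reversible coverP directP wrN.
Qed.
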